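(* There are no binary self-orthogonal codes with parameters $[45,6,22]$, $[53,6,26]$, $[60,6,30]$, $[47,7,22]$, $[71,7,34]$, $[79,7,38]$, $[93,7,46]$, $[102,7,50]$, $[109,7,54]$, $[117,7,58]$, or $[124,7,62]$.
   Context: A binary linear $[n,k,d]$ code $C$ is self-orthogonal if $C\subseteq C^\perp$ with respect to the standard inner product over $\mathbb{F}_2$. *)

From mathcomp Require Import all_boot all_algebra.
Set Implicit Arguments. Unset Strict Implicit. Unset Printing Implicit Defensive.
Import GRing.Theory.
Local Open Scope ring_scope.

(* A binary linear code of length n is a subspace of F_2^n, represented (as in
   mathcomp's mxalgebra) by a square matrix C : 'M['F_2]_n whose row space is the
   code; the codewords are the row vectors v with (v <= C)%MS. *)

Definition codeword (n : nat) (C : 'M['F_2]_n) (v : 'rV['F_2]_n) : bool :=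
  (v <= C)%MS.

Definition code_dim (n : nat) (C : 'M['F_2]_n) : nat := \rank C.

Definition wt (n : nat) (v : 'rV['F_2]_n) : nat := #|[set i | v 0 i != 0]|.

Definition min_dist (n : nat) (C : 'M['F_2]_n) (d : nat) : Prop :=
  (exists2 v, codeword C v & (v != 0) && (wt v == d)) /\
  (forall v, codeword C v -> v != 0 -> (d <= wt v)%N).

Definition is_nkd_code (n k d : nat) (C : 'M['F_2]_n) : Prop :=
  code_dim C = k /\ min_dist C d.

Definition dotF2 (n : nat) (u v : 'rV['F_2]_n) : 'F_2 := \sum_(i < n) u 0 i * v 0 i.

Definition in_dual (n : nat) (C : 'M['F_2]_n) (v : 'rV['F_2]_n) : Prop :=
  forall u, codeword C u -> dotF2 u v = 0.

Definition self_orthogonal (n : nat) (C : 'M['F_2]_n) : Prop :=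
  forall v, codeword C v -> in_dual C v.

From mathcomp Require Import all_boot all_algebra.
From mathcomp Require Import zify.
Set Implicit Arguments. Unset Strict Implicit. Unset Printing Implicit Defensive.
Import GRing.Theory.

(* In a self-orthogonal binary code all weights and all intersections
   |supp u :&: supp v| are even, so wt(u + v)/2 = wt u/2 + wt v/2 (mod 2): the
   map v |-> wt v/2 mod 2 is linear on the code, and its kernel, the subcode of
   doubly-even words, has dimension at least k - 1.  When d = 2 (mod 4) the
   nonzero doubly-even words have weight at least d + 2, so the Griesmer bound
   for that subcode forces n >= \sum_(i < k-1) ceil((d + 2) / 2^i), which fails
   for every listed parameter set.  The Griesmer bound is proved by the
   residual-code argument, with the residual code modelled by counting weights
   only outside the support of a minimum-weight codeword. *)

Lemma F2_neq0E (x : 'F_2) : x = ((x != 0)%:R)%R.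
Proof. by case: x => [[|[|//]] ?]; apply: val_inj. Qed.

Lemma F2_add_neq0 (x y : 'F_2) :
  (x + y != 0)%R + ((x != 0%R) && (y != 0%R)).*2 = (x != 0%R) + (y != 0%R).
Proof. by move: x y; do 2!case=> [[|[|//]] ?]; reflexivity. Qed.

Lemma F2_natr_eq0 m : (m%:R == 0 :> 'F_2)%R = ~~ odd m.
Proof. by rewrite -(dvdn_pcharf (pchar_Fp (isT : prime 2))) dvdn2. Qed.

Section Weights.
Variable n : nat.
Implicit Types (u v c : 'rV['F_2]_n) (S : {set 'I_n}).

Definition supp v : {set 'I_n} := [set i | v 0%R i != 0%R].

Definition wt_on S v : nat := #|S :&: supp v|.

Lemma wt_onE S v : wt_on S v = \sum_i ((i \in S) && (v 0%R i != 0%R)).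
Proof.
by rewrite /wt_on -sum1_card big_mkcond; apply: eq_bigr => i _; rewrite !inE.
Qed.

Lemma wt_onT v : wt_on setT v = wt v.
Proof. by rewrite /wt_on setTI. Qed.

Lemma wt_on_add S u v :
  wt_on S (u + v)%R + (wt_on (S :&: supp u) v).*2 = wt_on S u + wt_on S v.
Proof.
rewrite !wt_onE -mul2n big_distrr -!big_split /=; apply: eq_bigr => i _.
rewrite !inE mxE mul2n; case: (i \in S) => //=; exact: F2_add_neq0.
Qed.

Lemma wt_onID S B v : wt_on (S :&: B) v + wt_on (S :\: B) v = wt_on S v.
Proof.
rewrite !wt_onE -big_split /=; apply: eq_bigr => i _.
by rewrite !inE; case: (i \in S); case: (i \in B); rewrite /= ?addn0.
Qed.

Lemma wt_on_add_diff S u c :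
  wt_on S u + wt_on S (u + c)%R = (wt_on (S :\: supp c) u).*2 + wt_on S c.
Proof.
have : wt_on (S :&: supp c) u + wt_on (S :\: supp c) u = wt_on S u.
  exact: wt_onID.
have : wt_on S (u + c)%R + (wt_on (S :&: supp c) u).*2 = wt_on S c + wt_on S u.
  by rewrite addrC wt_on_add.
lia.
Qed.

Lemma wt_add u v : wt (u + v)%R + #|supp u :&: supp v|.*2 = wt u + wt v.
Proof. by rewrite -!wt_onT -wt_on_add /wt_on !setTI. Qed.

Lemma dotF2E u v : dotF2 u v = (#|supp u :&: supp v|%:R)%R.
Proof.
rewrite -[#|_|]/(wt_on (supp u) v) wt_onE natr_sum; apply: eq_bigr => i _.
by rewrite inE [LHS]F2_neq0E mulf_eq0 negb_or.
Qed.
End Weights.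

(* [griesmer k d] is the Griesmer sum \sum_(i < k) ceil(d / 2^i). *)
Fixpoint griesmer (k d : nat) : nat :=
  if k is k'.+1 then d + griesmer k' (uphalf d) else 0.

Lemma leq_griesmer_dim d k k' : k <= k' -> griesmer k d <= griesmer k' d.
Proof.
apply: (@homo_leq _ (griesmer^~ d) (fun x y => x <= y) leqnn leq_trans) => {k k'} k.
by elim: k d => //= k IH d; rewrite leq_add2l.
Qed.

Lemma griesmer_bound_on n m (V : 'M['F_2]_(m, n)) (S : {set 'I_n}) d :
  (forall v, (v <= V)%MS -> v != 0%R -> d <= wt_on S v) ->
  griesmer (\rank V) d <= #|S|.
Proof.
move eqk: (\rank V) => k; elim: k => [//|k IH] in m V S d eqk *; move=> minV /=.
have nzV : V != 0%R by rewrite -mxrank_eq0 eqk.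
have [|c /andP[cV nzc] cmin] :=
  @arg_minnP _ (nz_row V) (fun v => (v <= V)%MS && (v != 0%R)) (wt_on S).
  by rewrite nz_row_sub nz_row_eq0.
have le_d_c : d <= wt_on S c by exact: minV.
set V' := (V :\: c)%MS.
have rkV' : \rank V' = k.
  have := mxrank_cap_compl V c.
  by rewrite (capmx_idPr cV) rank_rV nzc eqk add1n => -[].
have minV' v : (v <= V')%MS -> v != 0%R -> uphalf d <= wt_on (S :\: supp c) v.
  move=> vV' nzv; apply: leq_trans (uphalf_leq le_d_c) _.
  have vV : (v <= V)%MS := submx_trans vV' (diffmxSl V c).
  have nzvc : (v + c)%R != 0%R.
    apply: contraNneq nzc => vc0.
    rewrite -submx0 -(capmx_diff V c) sub_capmx submx_refl andbT.
    have vE : v = (- c)%R by apply/eqP; rewrite -addr_eq0 vc0.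
    by move: vV'; rewrite vE eqmx_opp.
  have le_c_v := cmin v (introT andP (conj vV nzv)).
  have le_c_vc := cmin (v + c)%R (introT andP (conj (addmx_sub vV cV) nzvc)).
  rewrite leq_uphalf_double -(leq_add2r (wt_on S c)) -wt_on_add_diff.
  exact: leq_add.
rewrite -(cardsID (supp c) S) leq_add //; exact: IH minV'.
Qed.

Lemma griesmer_bound n m (V : 'M['F_2]_(m, n)) d :
  (forall v, (v <= V)%MS -> v != 0%R -> d <= wt v) -> griesmer (\rank V) d <= n.
Proof.
move=> minV; rewrite -[X in _ <= X]card_ord -cardsT.
by apply: griesmer_bound_on => v vV nzv; rewrite wt_onT minV.
Qed.

Lemma codim1_kernel (F : fieldType) m n (C : 'M[F]_(m, n)) (f : 'rV[F]_n -> F) :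
  (forall a u v, (u <= C)%MS -> (v <= C)%MS -> f (a *: u + v) = a * f u + f v)%R ->
  exists2 D : 'M[F]_(\rank C, n), \rank C <= (\rank D).+1 &
    forall v, (v <= D)%MS -> (v <= C)%MS /\ f v = 0%R.
Proof.
move=> linf.
have f0 : f 0%R = 0%R.
  have := linf (-1)%R 0%R 0%R (sub0mx _ _) (sub0mx _ _).
  by rewrite scaleN1r oppr0 addr0 mulN1r addNr.
pose B := row_base C; pose a := (\col_j f (row j B))%R.
have BC (w : 'rV_n) : (w <= B)%MS -> (w <= C)%MS by rewrite eq_row_base.
have fB x : f (x *m B)%R = (x *m a)%R 0%R 0%R.
  rewrite mulmx_sum_row mxE.
  pose K y z := (y <= C)%MS /\ f y = z.
  apply: (proj2 (big_rec2 K _ _)) => [|j y z _ [yC <-]]; first by rewrite /K sub0mx f0.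
  have rowC : (row j B <= C)%MS by apply/BC/row_sub.
  by rewrite /K addmx_sub ?scalemx_sub // linf // mxE.
exists (kermx a *m B)%R.
  rewrite mxrankMfree ?row_base_free // mxrank_ker.
  by have := rank_leq_col a; lia.
move=> v /submxP[y ->]; rewrite mulmxA; split; first exact/BC/submxMl.
by rewrite fB -mulmxA mulmx_ker mulmx0 mxE.
Qed.

Definition half_wt n (v : 'rV['F_2]_n) : 'F_2 := ((wt v)./2%:R)%R.

Section SelfOrthogonal.
Variables (n : nat) (C : 'M['F_2]_n).
Hypothesis soC : self_orthogonal C.

Lemma self_orthogonal_even_inter u v :
  codeword C u -> codeword C v -> ~~ odd #|supp u :&: supp v|.
Proof. by move=> uC vC; rewrite -F2_natr_eq0 -dotF2E; apply/eqP/soC. Qed.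

Lemma self_orthogonal_even_wt v : codeword C v -> ~~ odd (wt v).
Proof.
by move=> vC; rewrite -[wt v]/#|supp v| -[supp v]setIid self_orthogonal_even_inter.
Qed.

Lemma half_wt_add u v : codeword C u -> codeword C v ->
  half_wt (u + v)%R = (half_wt u + half_wt v)%R.
Proof.
move=> uC vC; have uvC : codeword C (u + v)%R := addmx_sub uC vC.
have := congr1 half (wt_add u v).
rewrite !halfD odd_double !(negbTE (self_orthogonal_even_wt _)) // doubleK !add0n.
rewrite /half_wt -natrD => <-.
rewrite natrD; have /eqP-> : (#|supp u :&: supp v|%:R == 0 :> 'F_2)%R.
  by rewrite F2_natr_eq0 self_orthogonal_even_inter.
by rewrite addr0.
Qed.

Lemma doubly_even_subcode :
  exists2 D : 'M['F_2]_(\rank C, n), \rank C <= (\rank D).+1 &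
    forall v, (v <= D)%MS -> codeword C v /\ 4 %| wt v.
Proof.
have [|D rkD kerD] := @codim1_kernel _ _ _ C (@half_wt n).
  move=> a u v uC vC; rewrite [a]F2_neq0E; case: (a != 0%R) => /=.
    by rewrite mulr1n scale1r mul1r half_wt_add.
  by rewrite mulr0n scale0r mul0r !add0r.
exists D => // v /kerD[vC half0]; split=> //.
have even_v := self_orthogonal_even_wt vC.
rewrite -[wt v]odd_double_half (negbTE even_v) add0n -muln2 -[4]/(2 * 2).
by rewrite dvdn_pmul2r // dvdn2 -F2_natr_eq0; apply/eqP.
Qed.

End SelfOrthogonal.

Lemma self_orthogonal_griesmer n (C : 'M['F_2]_n) d :
  self_orthogonal C -> d %% 4 = 2 ->
  (forall v, codeword C v -> v != 0%R -> d <= wt v) ->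
  griesmer (\rank C).-1 d.+2 <= n.
Proof.
move=> soC d_mod4 minC; have [D rkD evenD] := doubly_even_subcode soC.
apply: leq_trans (leq_griesmer_dim _ (_ : (\rank C).-1 <= \rank D)) (griesmer_bound _).
  by move: rkD; lia.
move=> v vD nzv; have [vC /dvdnP[q wt_v]] := evenD v vD.
by have := minC v vC nzv; rewrite wt_v; lia.
Qed.

Theorem proposition6p1 :
  forall (n k d : nat) (C : 'M['F_2]_n),
    (n, k, d) \in [:: (45, 6, 22); (53, 6, 26); (60, 6, 30); (47, 7, 22);
                      (71, 7, 34); (79, 7, 38); (93, 7, 46); (102, 7, 50);
                      (109, 7, 54); (117, 7, 58); (124, 7, 62)] ->
    is_nkd_code k d C -> ~ self_orthogonal C.
Proof.
move=> n k d C; set table := (X in _ \in X -> _) => params [rkC [_ minC]] soC.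
have /allP/(_ _ params)/andP[n_lt_gr /eqP d_mod4] :
  all (fun '(n, k, d) => (n < griesmer k.-1 d.+2) && (d %% 4 == 2)) table by [].
apply/negP: n_lt_gr; rewrite -leqNgt -rkC.
exact: self_orthogonal_griesmer soC d_mod4 minC.
Qed.
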